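(* For every pair of non-uniformly stable matchings $\mu_1,\mu_2$ in $G$, $V(\mu_1)=V(\mu_2)$, where $V(\mu)$ denotes the set of vertices $v\in V$ with $\mu(v)\ne\emptyset$.
   Context: Setting: $G=(V,E)$ is a finite simple bipartite graph with $V=V_1\sqcup V_2$, every edge joining a vertex of $V_1$ to a vertex of $V_2$; an edge is identified with the set of its two endpoints. $E$ is partitioned into $E_1,E_2$. For $F\subseteq E$ and $v\in V$, $F(v)$ is the set of edges of $F$ incident to $v$. For every $v\in V$ there is a transitive and complete binary relation $\succsim_v$ on $E(v)\cup\{\emptyset\}$ with $e\succsim_v\emptyset$ and $\emptyset\not\succsim_v e$ for all $e\in E(v)$; $e\succ_v f$ means $e\succsim_v f$ and $f\not\succsim_v e$. A matching is $\mu\subseteq E$ with $|\mu(v)|\le1$ for all $v$; $\mu(v)$ denotes the edge of $\mu$ at $v$, or $\emptyset$. An edge $e\in E\setminus\mu$ weakly blocks $\mu$ if $e\succsim_v\mu(v)$ for every $v\in e$; it strongly blocks $\mu$ if additionally $e\succ_w\mu(w)$ for some $w\in e$. $\mu$ is non-uniformly stable if no edge of $E_1\setminus\mu$ weakly blocks $\mu$ and no edge of $E_2\setminus\mu$ strongly blocks $\mu$. *)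

From mathcomp Require Import all_boot.
Set Implicit Arguments. Unset Strict Implicit. Unset Printing Implicit Defensive.

(* Vertices form a finite type V; the bipartition is given by side : V -> bool
   (V1 = side true, V2 = side false).
   The empty "edge" (being unmatched) is encoded as None : option {set V}. *)

Section Matching.
Variable V : finType.

Definition bipartite_graph (side : V -> bool) (E : {set {set V}}) : Prop :=
  forall e, e \in E -> exists u w, [/\ side u, ~~ side w & e = [set u; w]].

Definition pref_dom (E : {set {set V}}) (v : V) (x : option {set V}) : bool :=
  if x is Some e then (e \in E) && (v \in e) else true.

Definition valid_prefs (E : {set {set V}})
  (pref : V -> option {set V} -> option {set V} -> bool) : Prop :=
  forall v,
    [/\ (forall x y z, pref_dom E v x -> pref_dom E v y -> pref_dom E v z ->
           pref v x y -> pref v y z -> pref v x z),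
        (forall x y, pref_dom E v x -> pref_dom E v y -> pref v x y || pref v y x)
      & (forall e, e \in E -> v \in e -> pref v (Some e) None && ~~ pref v None (Some e))].

Definition strict_pref (pref : V -> option {set V} -> option {set V} -> bool)
  v x y := pref v x y && ~~ pref v y x.

Definition is_matching (E mu : {set {set V}}) : Prop :=
  mu \subset E /\ forall v : V, #|[set e in mu | v \in e]| <= 1.

Definition mu_at (mu : {set {set V}}) (v : V) : option {set V} :=
  [pick e in mu | v \in e].

Definition weakly_blocks (pref : V -> option {set V} -> option {set V} -> bool) (mu : {set {set V}}) (e : {set V}) : Prop :=
  e \notin mu /\ forall v, v \in e -> pref v (Some e) (mu_at mu v).

Definition strongly_blocks (pref : V -> option {set V} -> option {set V} -> bool) (mu : {set {set V}}) (e : {set V}) : Prop :=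
  weakly_blocks pref mu e /\ exists2 w, w \in e & strict_pref pref w (Some e) (mu_at mu w).

Definition nonuniformly_stable (E1 E2 : {set {set V}}) (pref : V -> option {set V} -> option {set V} -> bool) (mu : {set {set V}}) : Prop :=
  (forall e, e \in E1 -> ~ weakly_blocks pref mu e) /\
  (forall e, e \in E2 -> ~ strongly_blocks pref mu e).

Definition covered (mu : {set {set V}}) : {set V} := [set v | mu_at mu v != None].

End Matching.

(* Let A (resp. B) be the vertices strictly preferring their mu1-partner to
   their mu2-partner (resp. the converse).  If x is in A with mu1-edge e, then
   e is not in mu2, and by stability of mu2 it cannot block mu2 (strongly, via
   x), so some endpoint y of e does not weakly prefer e; y lies in B.  As e has
   only two endpoints, mu1 maps A injectively into mu1(B), whence
   #|A| <= #|B|.  Symmetrically mu2 maps B injectively into mu2(A); a vertex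
   matched by mu1 but not by mu2 lies in A and has mu2-partner "unmatched",
   which no vertex of B can strictly prefer, so #|B| < #|A|. *)

From mathcomp Require Import all_boot.
Set Implicit Arguments. Unset Strict Implicit. Unset Printing Implicit Defensive.

Lemma card_le2_eq (T : finType) (A : {set T}) x x' y :
  #|A| <= 2 -> x \in A -> x' \in A -> y \in A -> y != x -> y != x' -> x = x'.
Proof.
move=> cardA xA x'A yA yx yx'; apply/eqP; apply: contraTT cardA => xx'.
have sub : [set y; x; x'] \subset A by rewrite !subUset !sub1set yA xA x'A.
rewrite -ltnNge (leq_trans _ (subset_leq_card sub)) //.
by rewrite -setUA cardsU1 cards2 xx' !inE negb_or yx yx'.
Qed.

Lemma bipartite_edge_card (V : finType) (side : V -> bool) (E : {set {set V}}) e :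
  bipartite_graph side E -> e \in E -> #|e| <= 2.
Proof. by move=> bipE /bipE[u [w [_ _ ->]]]; rewrite cards2 ltnS leq_b1. Qed.

Section MatchingPartner.
Variables (V : finType) (E mu : {set {set V}}).
Hypothesis mu_matching : is_matching E mu.

Lemma mu_atP v e : mu_at mu v = Some e -> e \in mu /\ v \in e.
Proof. by rewrite /mu_at; case: pickP => // e' /andP[? ?] [<-]. Qed.

Lemma mu_at_edge v e : e \in mu -> v \in e -> mu_at mu v = Some e.
Proof.
case: mu_matching => _ deg1 emu ve.
rewrite /mu_at; case: pickP => [e' /andP[e'mu ve'] | none].
  by have /card_le1_eqP/(_ e' e) := deg1 v; rewrite !inE e'mu ve' emu ve => ->.
by have := none e; rewrite emu ve.
Qed.

Lemma mu_at_edgeE v e : mu_at mu v = Some e -> e \in E.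
Proof. by case: mu_matching => /subsetP sub _ /mu_atP[/sub]. Qed.

Lemma mu_at_dom v : pref_dom E v (mu_at mu v).
Proof.
case def_e: (mu_at mu v) => [e|] //=.
by rewrite (mu_at_edgeE def_e) (mu_atP def_e).2.
Qed.

End MatchingPartner.

Section StableMatchings.
Variables (V : finType) (E E1 E2 : {set {set V}}).
Variable pref : V -> option {set V} -> option {set V} -> bool.
Hypothesis edge_card : forall e, e \in E -> #|e| <= 2.
Hypothesis E_cover : E1 :|: E2 = E.
Hypothesis prefs : valid_prefs E pref.

Definition improves (mu1 mu2 : {set {set V}}) : {set V} :=
  [set x | strict_pref pref x (mu_at mu1 x) (mu_at mu2 x)].

Lemma strict_pref_None v z : pref_dom E v z -> ~~ strict_pref pref v None z.
Proof.
case: z => [e /andP[eE ve] | _]; rewrite /strict_pref; last by case: pref.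
by case: (prefs v) => _ _ /(_ e eE ve) /andP[_ /negbTE->].
Qed.

Lemma strict_pref_Some v e : e \in E -> v \in e -> strict_pref pref v (Some e) None.
Proof. by move=> eE ve; case: (prefs v) => _ _ /(_ e eE ve). Qed.

Lemma improves_mu_at_Some mu1 mu2 x :
  is_matching E mu2 -> x \in improves mu1 mu2 -> exists e, mu_at mu1 x = Some e.
Proof.
move=> mat2; rewrite inE; case: (mu_at mu1 x) => [e|]; first by exists e.
by move/negP: (strict_pref_None (mu_at_dom mat2 x)).
Qed.

Lemma improves_edge_objector mu1 mu2 x e :
  is_matching E mu1 -> is_matching E mu2 -> nonuniformly_stable E1 E2 pref mu2 ->
  mu_at mu1 x = Some e -> x \in improves mu1 mu2 ->
  exists2 y, y \in e & ~~ pref y (Some e) (mu_at mu2 y).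
Proof.
move=> mat1 mat2 [stab1 stab2] def_e; rewrite inE def_e => x_imp.
have [_ xe] := mu_atP def_e.
have e_mu2 : e \notin mu2.
  apply: contraTN x_imp => emu2.
  by rewrite (mu_at_edge mat2 emu2 xe) /strict_pref; case: pref.
apply/exists_inP; rewrite -negb_forall_in; apply/negP => /forall_inP all_pref.
have weak : weakly_blocks pref mu2 e by split.
move: (mu_at_edgeE mat1 def_e); rewrite -E_cover inE => /orP[/stab1 | /stab2]; first exact.
by apply; split=> //; exists x.
Qed.

Lemma mu_at_improves_inj mu1 mu2 :
  is_matching E mu1 -> is_matching E mu2 -> nonuniformly_stable E1 E2 pref mu2 ->
  {in improves mu1 mu2 &, injective (mu_at mu1)}.
Proof.
move=> mat1 mat2 stab2 x x' x_imp x'_imp same.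
have [e def_e] := improves_mu_at_Some mat2 x_imp.
have [y ye y_obj] := improves_edge_objector mat1 mat2 stab2 def_e x_imp.
have [_ xe] := mu_atP def_e.
have [_ x'e] := mu_atP (etrans (esym same) def_e).
have not_objector z : z \in improves mu1 mu2 -> mu_at mu1 z = Some e -> y != z.
  rewrite inE => /andP[z_pref _] def_ez; apply: (contraNneq _ y_obj) => ->.
  by rewrite -def_ez.
apply: (card_le2_eq (edge_card (mu_at_edgeE mat1 def_e)) xe x'e ye).
  exact: not_objector.
by apply: not_objector; rewrite // -same.
Qed.

Lemma mu_at_improves_sub mu1 mu2 :
  is_matching E mu1 -> is_matching E mu2 -> nonuniformly_stable E1 E2 pref mu2 ->
  mu_at mu1 @: improves mu1 mu2 \subset mu_at mu1 @: improves mu2 mu1.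
Proof.
move=> mat1 mat2 stab2; apply/subsetP => _ /imsetP[x x_imp ->].
have [e def_e] := improves_mu_at_Some mat2 x_imp.
have [y ye y_obj] := improves_edge_objector mat1 mat2 stab2 def_e x_imp.
have def_ey : mu_at mu1 y = Some e := mu_at_edge mat1 (mu_atP def_e).1 ye.
apply/imsetP; exists y; last by rewrite def_ey.
rewrite inE def_ey /strict_pref y_obj andbT.
case: (prefs y) => _ total _.
have := total _ (Some e) (mu_at_dom mat2 y); rewrite /= (mu_at_edgeE mat1 def_e) ye.
by move/(_ isT); rewrite (negbTE y_obj) orbF.
Qed.

Lemma card_improves_le mu1 mu2 :
  is_matching E mu1 -> is_matching E mu2 -> nonuniformly_stable E1 E2 pref mu2 ->
  #|improves mu1 mu2| <= #|improves mu2 mu1|.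
Proof.
move=> mat1 mat2 stab2.
rewrite -(card_in_imset (mu_at_improves_inj mat1 mat2 stab2)).
exact: leq_trans (subset_leq_card (mu_at_improves_sub mat1 mat2 stab2)) (leq_imset_card _ _).
Qed.

Lemma card_improves_lt mu1 mu2 v :
  is_matching E mu1 -> is_matching E mu2 -> nonuniformly_stable E1 E2 pref mu1 ->
  v \in covered mu1 -> v \notin covered mu2 ->
  #|improves mu2 mu1| < #|improves mu1 mu2|.
Proof.
move=> mat1 mat2 stab1; rewrite !inE negbK.
case def_e: (mu_at mu1 v) => [e|] // _ /eqP v_free.
rewrite -(card_in_imset (mu_at_improves_inj mat2 mat1 stab1)).
apply: leq_trans (leq_imset_card (mu_at mu2) _); apply: proper_card; apply/properP.
split; first exact: mu_at_improves_sub.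
exists None.
  apply/imsetP; exists v => //; rewrite inE def_e v_free.
  by apply: strict_pref_Some (mu_at_edgeE mat1 def_e) (mu_atP def_e).2.
apply/imsetP => -[y]; rewrite inE => + free_y.
by rewrite -free_y; apply/negP/strict_pref_None/mu_at_dom.
Qed.

Lemma covered_stable_sub mu1 mu2 :
  is_matching E mu1 -> is_matching E mu2 ->
  nonuniformly_stable E1 E2 pref mu1 -> nonuniformly_stable E1 E2 pref mu2 ->
  covered mu1 \subset covered mu2.
Proof.
move=> mat1 mat2 stab1 stab2; apply/subsetP => v cov1; apply: contraT => not_cov2.
have := card_improves_lt mat1 mat2 stab1 cov1 not_cov2.
by rewrite ltnNge card_improves_le.
Qed.

End StableMatchings.

Theorem theorem5p1 (V : finType) (side : V -> bool) (E E1 E2 : {set {set V}})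
  (pref : V -> option {set V} -> option {set V} -> bool) :
  bipartite_graph side E ->
  E1 :|: E2 = E -> [disjoint E1 & E2] ->
  valid_prefs E pref ->
  forall mu1 mu2 : {set {set V}},
    is_matching E mu1 -> is_matching E mu2 ->
    nonuniformly_stable E1 E2 pref mu1 -> nonuniformly_stable E1 E2 pref mu2 ->
    covered mu1 = covered mu2.
Proof.
move=> bipE E_cover _ prefs mu1 mu2 mat1 mat2 stab1 stab2.
have edge_card := fun e => @bipartite_edge_card V side E e bipE.
apply/eqP; rewrite eqEsubset.
by rewrite !(covered_stable_sub edge_card E_cover prefs).
Qed.
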